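(* Let $R$ be a ring and $\mathfrak a\in \mathrm{Ass}_l(R)$. Then: (1) The set $\mathrm{Den}_l(R,\mathfrak a)$ is an ordered abelian semigroup under the product $S_1S_2:=\langle S_1,S_2\rangle$ (the multiplicative subsemigroup of $(R,\cdot)$ generated by $S_1$ and $S_2$); that is, for $S_1,S_2,S_3\in \mathrm{Den}_l(R,\mathfrak a)$ we have $S_1S_2\in \mathrm{Den}_l(R,\mathfrak a)$, $S_1S_2=S_2S_1$, and $S_1\subseteq S_2$ implies $S_1S_3\subseteq S_2S_3$. (2) The set $S_{\mathfrak a}(R):=\bigcup_{S\in \mathrm{Den}_l(R,\mathfrak a)}S$ belongs to $\mathrm{Den}_l(R,\mathfrak a)$, and hence is the largest element of $(\mathrm{Den}_l(R,\mathfrak a),\subseteq)$. (3) If $S_i\in \mathrm{Den}_l(R,\mathfrak a)$ for $i\in I$, where $I$ is an arbitrary non-empty set, then $\langle S_i\mid i\in I\rangle:=\bigcup_{\emptyset\neq J\subseteq I,\ |J|<\infty}\prod_{j\in J}S_j$ belongs to $\mathrm{Den}_l(R,\mathfrak a)$ and is the least upper bound of $\{S_i\}_{i\in I}$ in $(\mathrm{Den}_l(R,\mathfrak a),\subseteq)$.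
   Context: Rings are associative with $1$. A multiplicatively closed subset $S$ of a ring $R$ is a subset with $1\in S$, $0\notin S$ and $st\in S$ for all $s,t\in S$. It is a left Ore set if $Sr\cap Rs\neq\emptyset$ for all $r\in R$, $s\in S$. For a left Ore set $S$, $\mathrm{ass}(S):=\{r\in R\mid sr=0 \text{ for some } s\in S\}$ (an ideal of $R$). A left Ore set $S$ is a left denominator set if whenever $rs=0$ with $r\in R$, $s\in S$, there is $t\in S$ with $tr=0$ (equivalently, the left localization $S^{-1}R$ exists). $\mathrm{Den}_l(R)$ is the set of left denominator sets of $R$, $\mathrm{Ass}_l(R):=\{\mathrm{ass}(S)\mid S\in \mathrm{Den}_l(R)\}$, and for an ideal $\mathfrak a\in\mathrm{Ass}_l(R)$, $\mathrm{Den}_l(R,\mathfrak a):=\{S\in \mathrm{Den}_l(R)\mid \mathrm{ass}(S)=\mathfrak a\}$. *)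

From mathcomp Require Import all_boot all_algebra.
Set Implicit Arguments. Unset Strict Implicit. Unset Printing Implicit Defensive.
Import GRing.Theory.
Local Open Scope ring_scope.

Section Den.
Variable R : pzRingType.

Definition subsetR (A B : R -> Prop) : Prop := forall x, A x -> B x.
Definition eqsetR (A B : R -> Prop) : Prop := forall x, A x <-> B x.

Definition mult_closed (S : R -> Prop) : Prop :=
  S 1 /\ ~ S 0 /\ (forall s t, S s -> S t -> S (s * t)).

Definition left_Ore (S : R -> Prop) : Prop :=
  mult_closed S /\
  (forall r s, S s -> exists s' r', S s' /\ s' * r = r' * s).

Definition ass (S : R -> Prop) : R -> Prop :=
  fun r => exists s, S s /\ s * r = 0.

Definition left_den (S : R -> Prop) : Prop :=
  left_Ore S /\
  (forall r s, S s -> r * s = 0 -> exists t, S t /\ t * r = 0).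

Definition Den_l_a (a : R -> Prop) (S : R -> Prop) : Prop :=
  left_den S /\ eqsetR (ass S) a.

Definition Ass_l (a : R -> Prop) : Prop := exists S, Den_l_a a S.

Inductive gen_semigroup (X : R -> Prop) : R -> Prop :=
| gen_in : forall x, X x -> gen_semigroup X x
| gen_mul : forall x y,
    gen_semigroup X x -> gen_semigroup X y -> gen_semigroup X (x * y).

Definition den_prod (S1 S2 : R -> Prop) : R -> Prop :=
  gen_semigroup (fun x => S1 x \/ S2 x).

Definition S_a (a : R -> Prop) : R -> Prop :=
  fun x => exists S, Den_l_a a S /\ S x.

Definition den_join (I : Type) (S : I -> R -> Prop) : R -> Prop :=
  gen_semigroup (fun x => exists i, S i x).

End Den.

(* The subsemigroup T generated by denominator sets S_i with common ideal a is
   again one: a left Ore or denominator witness for a product of generators is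
   obtained by applying the condition for each factor in turn, and ass T = a
   because t r in a with t in T forces r in a (peel off one factor at a time
   using ass S_i = a).  Then S1 S2, S_a(R) and <S_i | i in I> are all joins of
   families in Den_l(R, a); for S_a(R) the join of all of Den_l(R, a) contains
   S_a(R) and, being in Den_l(R, a), is contained in it. *)
From mathcomp Require Import all_boot all_algebra.
Set Implicit Arguments. Unset Strict Implicit. Unset Printing Implicit Defensive.
Import GRing.Theory.
Local Open Scope ring_scope.

Section GenSemigroup.
Variable R : pzRingType.

Lemma gen_semigroup_min (X T : R -> Prop) :
  subsetR X T -> (forall s t, T s -> T t -> T (s * t)) ->
  subsetR (gen_semigroup X) T.
Proof. by move=> XT TM x; elim=> [y /XT|y z _ Ty _ Tz]; last exact: TM. Qed.

Lemma gen_semigroup_sub (X Y : R -> Prop) :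
  subsetR X Y -> subsetR (gen_semigroup X) (gen_semigroup Y).
Proof.
move=> XY; apply: gen_semigroup_min => [x /XY|]; [exact: gen_in | exact: gen_mul].
Qed.

Lemma gen_semigroup_eq (X Y : R -> Prop) :
  eqsetR X Y -> eqsetR (gen_semigroup X) (gen_semigroup Y).
Proof. by move=> XY x; split; apply: gen_semigroup_sub => y /XY. Qed.

End GenSemigroup.

Section DenominatorSets.
Variables (R : pzRingType) (a : R -> Prop).

Lemma Den_l_a_eqsetR (S T : R -> Prop) :
  eqsetR S T -> Den_l_a a S -> Den_l_a a T.
Proof.
move=> E [[[[S1 [S0 SM]] oreS] denS] assS].
split; [split; [split; [split; [|split]|]|]|].
- exact/E.
- by move=> /E.
- by move=> s t /E Ss /E St; apply/E; apply: SM.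
- move=> r s /E /(oreS r) [s' [r' [Ss' e]]].
  by exists s', r'; split=> //; apply/E.
- move=> r s /E Ss /(denS r s Ss) [t [St e]].
  by exists t; split=> //; apply/E.
- move=> r; split.
  + by case=> s [/E Ss e]; apply/assS; exists s.
  + by move=> /assS [s [Ss e]]; exists s; split=> //; apply/E.
Qed.

Lemma Den_l_a_ass_cancel (S : R -> Prop) s r :
  Den_l_a a S -> S s -> a (s * r) -> a r.
Proof.
move=> [[[[_ [_ SM]] _] _] assS] Ss /assS [u [Su e]].
by apply/assS; exists (u * s); split; [exact: SM | rewrite -mulrA].
Qed.

Section Join.
Variables (I : Type) (S : I -> R -> Prop).
Hypotheses (I_inhabited : inhabited I) (DS : forall i, Den_l_a a (S i)).

Let T := den_join S.

Lemma den_join_ub i : subsetR (S i) T.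
Proof. by move=> x Sx; apply: gen_in; exists i. Qed.

Lemma den_join_ass_cancel t r : T t -> a (t * r) -> a r.
Proof.
move=> Tt; elim: Tt r => [x [i Sx]|x y _ IHx _ IHy] r.
  exact: Den_l_a_ass_cancel (DS i) Sx.
by rewrite -mulrA => /IHx; apply: IHy.
Qed.

Lemma den_join_ass : eqsetR (ass T) a.
Proof.
case: I_inhabited => i0; have [_ assS0] := DS i0.
move=> r; split.
- case=> t [Tt e]; apply: (den_join_ass_cancel Tt); rewrite e.
  have [[[[S01 _] _] _] _] := DS i0.
  by apply/assS0; exists 1; split; last rewrite mulr0.
- by move=> /assS0 [u [Su e]]; exists u; split=> //; apply: den_join_ub Su.
Qed.

Lemma den_join_mult_closed : mult_closed T.
Proof.
case: I_inhabited => i0; have [[[[S01 [S00 _]] _] _] assS0] := DS i0.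
split; first exact: den_join_ub S01.
split; last exact: gen_mul.
move=> T0; have /assS0 [u [Su e]] : a 1.
  by apply/den_join_ass; exists 0; split; last rewrite mul0r.
by rewrite mulr1 in e; rewrite e in Su.
Qed.

Lemma den_join_Ore r t : T t -> exists t' r', T t' /\ t' * r = r' * t.
Proof.
move=> Tt; elim: Tt r => [x [i Sx]|x y _ IHx _ IHy] r.
- have [[[_ oreS] _] _] := DS i.
  have [s' [r' [Ss' e]]] := oreS r x Sx.
  by exists s', r'; split=> //; apply: den_join_ub Ss'.
- have [u1 [v1 [Tu1 e1]]] := IHy r; have [u2 [v2 [Tu2 e2]]] := IHx v1.
  exists (u2 * u1), v2; split; first exact: gen_mul.
  by rewrite -mulrA e1 mulrA e2 mulrA.
Qed.

Lemma den_join_left_regular r t : T t -> r * t = 0 -> exists u, T u /\ u * r = 0.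
Proof.
move=> Tt; elim: Tt r => [x [i Sx]|x y _ IHx _ IHy] r.
- have [[_ denS] _] := DS i.
  move=> /(denS r x Sx) [u [Su e]].
  by exists u; split=> //; apply: den_join_ub Su.
- rewrite mulrA => /IHy [u1 [Tu1]]; rewrite mulrA => /IHx [u2 [Tu2 e2]].
  by exists (u2 * u1); split; [exact: gen_mul | rewrite -mulrA].
Qed.

Lemma Den_l_a_den_join : Den_l_a a T.
Proof.
split; last exact: den_join_ass.
split; last exact: den_join_left_regular.
by split; [exact: den_join_mult_closed | exact: den_join_Ore].
Qed.

Lemma den_join_least (U : R -> Prop) :
  Den_l_a a U -> (forall i, subsetR (S i) U) -> subsetR T U.
Proof.
move=> [[[[_ [_ UM]] _] _] _] SU.
by apply: gen_semigroup_min => // x [i /SU].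
Qed.

End Join.

Lemma den_join_bool (S1 S2 : R -> Prop) :
  eqsetR (den_join (fun b : bool => if b then S1 else S2)) (den_prod S1 S2).
Proof.
apply: gen_semigroup_eq => x; split; first by case=> -[]; [left | right].
by case=> Sx; [exists true | exists false].
Qed.

Lemma den_join_Den_l_a :
  eqsetR (den_join (fun S : {S | Den_l_a a S} => sval S)) (S_a a).
Proof.
move=> x; split; last by case=> S [DS Sx]; apply: gen_in; exists (exist _ S DS).
move=> Tx; exists (den_join (fun S : {S | Den_l_a a S} => sval S)); split=> //.
have inhabited_Den : inhabited {S | Den_l_a a S}.
  by elim: Tx => // y [S _]; constructor.
by apply: (Den_l_a_den_join inhabited_Den) => -[S DS].
Qed.

End DenominatorSets.

Theorem theorem2p1 (R : pzRingType) (a : R -> Prop) (Ha : Ass_l a) :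
  (* (1) *)
  (forall S1 S2 S3 : R -> Prop,
      Den_l_a a S1 -> Den_l_a a S2 -> Den_l_a a S3 ->
      Den_l_a a (den_prod S1 S2) /\
      eqsetR (den_prod S1 S2) (den_prod S2 S1) /\
      (subsetR S1 S2 -> subsetR (den_prod S1 S3) (den_prod S2 S3))) /\
  (* (2) *)
  (Den_l_a a (S_a a) /\
   (forall S : R -> Prop, Den_l_a a S -> subsetR S (S_a a))) /\
  (* (3) *)
  (forall (I : Type) (S : I -> R -> Prop),
      inhabited I ->
      (forall i, Den_l_a a (S i)) ->
      Den_l_a a (den_join S) /\
      (forall i, subsetR (S i) (den_join S)) /\
      (forall T : R -> Prop, Den_l_a a T ->
         (forall i, subsetR (S i) T) -> subsetR (den_join S) T)).
Proof.
split; [|split].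
- move=> S1 S2 S3 D1 D2 _; split; [|split].
  + apply: Den_l_a_eqsetR (den_join_bool S1 S2) _.
    by apply: Den_l_a_den_join; [constructor; exact: true | case].
  + by apply: gen_semigroup_eq => x; split; case; [right | left | right | left].
  + by move=> S12; apply: gen_semigroup_sub => x [/S12|]; [left | right].
- case: Ha => S0 D0; split; last by move=> S DS x Sx; exists S.
  apply: Den_l_a_eqsetR (den_join_Den_l_a a) _.
  by apply: Den_l_a_den_join => [|[S DS]]; first by constructor; exists S0.
- move=> I S HI DS; split; first exact: Den_l_a_den_join.
  by split; [exact: den_join_ub | exact: den_join_least].
Qed.
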